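(* Let $\theta_1<\theta_2$, $f\in C^2([\theta_1,\theta_2])$, $\gamma>1$, and let $I\subseteq[\theta_1,\theta_2]$ be a closed interval. Suppose that, for positive constants $A$ and $\alpha$ with $\alpha<2\gamma-3$, one of the following holds: $|f'(s)f''(s)|\ge A(s-\theta_1)^\alpha$ for all $s\in I$; or $|f'(s)f''(s)|\ge A(\theta_2-s)^\alpha$ for all $s\in I$. Then there is a constant $C>0$ depending only on $A,\alpha,\theta_1,\theta_2,\gamma$ such that $\int_I|f(s)|^{-1/\gamma}\,ds\le C$. *)

From HB Require Import structures.
From mathcomp Require Import all_boot all_order all_algebra.
From mathcomp Require Import all_classical all_reals all_analysis.
Set Implicit Arguments. Unset Strict Implicit. Unset Printing Implicit Defensive.
Import Order.TTheory GRing.Theory Num.Theory.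
Import numFieldNormedType.Exports.
Local Open Scope classical_set_scope.
Local Open Scope ring_scope.

Definition C2_on {R : realType} (t1 t2 : R) (f : R -> R) : Prop :=
  [/\ {in `[t1, t2], forall x, derivable f x 1},
      {in `[t1, t2], forall x, derivable (derive1 f) x 1} &
      {within `[t1, t2], continuous (derive1 (derive1 f) : R -> R)}].

Definition neg_pow_abs {R : realType} (g : R) (f : R -> R) (s : R) : \bar R :=
  if f s == 0 then +oo%E else ((`|f s| `^ (- g^-1))%:E).

From HB Require Import structures.
From mathcomp Require Import all_boot all_order all_algebra.
From mathcomp Require Import all_classical all_reals all_analysis.
From mathcomp Require Import measurable_realfun lra.
Set Implicit Arguments.
Unset Strict Implicit.
Unset Printing Implicit Defensive.

Import Order.TTheory GRing.Theory Num.Theory.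
Import numFieldNormedType.Exports.
Local Open Scope classical_set_scope.
Local Open Scope ring_scope.

(* Put phi := f'^2, so that |phi'| = 2 |f' f''| >= 2 A |s - th|^al, where th is
   t1 or t2 and hence lies outside ]a, b[.  Thus phi' does not vanish inside
   [a, b], phi is monotone there, and the mean value theorem on a quarter of
   [x, y] kept away from th gives |phi y - phi x| >= 2 A ((y - x)/4)^(al + 1).
   Taking for x the endpoint c where phi is smallest yields
   |f' s| >= k (|s - c|/4)^q with k = sqrt (2 A) and q = (al + 1)/2.  The same
   argument applied to f, with x a minimiser z of |f| on [a, b], gives
   |f s| >= k (|s - z|/16)^(q + 1), hence |f s|^(-1/g) is at most a constant
   times |s - z|^(-r) with r = (al + 3)/(2 g).  The hypothesis al < 2 g - 3 is
   exactly r < 1, which makes this bound integrable, with constants depending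
   only on A, al, g and t2 - t1. *)

Section power_integrals.
Context {R : realType}.
Local Notation mu := (@lebesgue_measure R).

Lemma is_derive_powR_sub (z a x : R) : z < x ->
  is_derive x 1 (fun y => (y - z) `^ a) (a * (x - z) `^ (a - 1)).
Proof.
move=> zx.
have dsub : is_derive x 1 (fun y => y - z) 1.
  by have := is_deriveB (is_derive_id x 1) (is_derive_cst z x 1); rewrite subr0.
have dpow : is_derive (x - z) 1 (@powR R ^~ a) (a * (x - z) `^ (a - 1)).
  by apply: is_derive1_powR; rewrite subr_gt0.
by have := is_derive1_comp (g := fun y => y - z) dpow dsub; rewrite mulr1.
Qed.

Lemma is_derive_powR_rsub (z a x : R) : x < z ->
  is_derive x 1 (fun y => (z - y) `^ a) (- (a * (z - x) `^ (a - 1))).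
Proof.
move=> xz.
have dsub : is_derive x 1 (fun y => z - y) (-1).
  by have := is_deriveB (is_derive_cst z x 1) (is_derive_id x 1); rewrite sub0r.
have dpow : is_derive (z - x) 1 (@powR R ^~ a) (a * (z - x) `^ (a - 1)).
  by apply: is_derive1_powR; rewrite subr_gt0.
by have := is_derive1_comp (g := fun y => z - y) dpow dsub; rewrite mulrN1.
Qed.

Lemma ge0_integral_itv_le_inner (h : R -> R) (u v B : R) : u < v ->
  {in `]u, v[, forall x, 0 <= h x} -> measurable_fun `]u, v[ h ->
  (forall w1 w2, u < w1 -> w1 < w2 -> w2 < v ->
     (\int[mu]_(x in `[w1, w2]) (h x)%:E <= B%:E)%E) ->
  (\int[mu]_(x in `[u, v]) (h x)%:E <= B%:E)%E.
Proof.
move=> uv h0 mh hB; have vu0 : 0 < v - u by rewrite subr_gt0.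
pose d n : R := (v - u) / n.+3%:R.
have d_gt0 n : 0 < d n by rewrite divr_gt0.
have d_lt n : d n < (v - u) / 2.
  by rewrite ltr_pM2l // ltf_pV2 ?posrE // ltr_nat.
pose F n : set R := `[u + d n, v - d n]%classic.
have Fuv n : F n `<=` `]u, v[.
  move=> x; rewrite /F /= !in_itv /= => /andP[? ?]; have := d_gt0 n.
  by move=> ?; apply/andP; split; lra.
have ndF : nondecreasing_seq F.
  move=> n m nm; rewrite subsetEset => x; rewrite /F /= !in_itv /= => /andP[? ?].
  have : d m <= d n by rewrite ler_pM2l // lef_pV2 ?posrE // ler_nat.
  by move=> ?; apply/andP; split; lra.
have UF : `]u, v[%classic = \bigcup_n F n.
  apply/seteqP; split => [x|x [n _ /Fuv] //].
  rewrite /= in_itv /= => /andP[ux xv].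
  pose m := Num.min (x - u) (v - x).
  have m_gt0 : 0 < m by rewrite lt_min !subr_gt0 ux xv.
  have /archi_boundP := ltW (divr_gt0 vu0 m_gt0); set N := Num.Def.archi_bound _.
  move=> vuN; exists N => //; rewrite /F /= in_itv /=.
  have : d N <= m.
    rewrite ler_pdivrMr ?ltr0n // mulrC -ler_pdivrMr //.
    by apply: le_trans (ltW vuN) _; rewrite ler_nat -addn3 leq_addr.
  by rewrite le_min => /andP[? ?]; apply/andP; split; lra.
have mEh : measurable_fun `]u, v[ (EFin \o h) by exact/measurable_EFinP.
have cvgF := @ge0_nondecreasing_set_cvg_integral _ (measurableTypeR R) R F
  (EFin \o h) mu ndF (fun=> measurable_itv _)
  (fun n => measurable_funS (measurable_itv _) (Fuv n) mEh)
  (fun n x Fx => (h0 x (Fuv n x Fx) : (0 <= (h x)%:E)%E)).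
rewrite integral_itv_bndoo // UF -(cvg_lim _ cvgF) //.
apply: lime_le; first exact: cvgP cvgF.
apply: nearW => n; apply: hB; have := d_gt0 n; have := d_lt n; lra.
Qed.

Lemma ge0_integral_itv_le_antiderivative (h F : R -> R) (u v B : R) : u < v ->
  {in `]u, v[, forall x, 0 <= h x} -> {in `]u, v[, continuous h} ->
  {in `]u, v[, forall x : R, is_derive x 1 F (h x)} ->
  (forall w1 w2, u < w1 -> w1 < w2 -> w2 < v -> F w2 - F w1 <= B) ->
  (\int[mu]_(x in `[u, v]) (h x)%:E <= B%:E)%E.
Proof.
move=> uv h0 ch dF FB; apply: ge0_integral_itv_le_inner => //.
  by apply: open_continuous_measurable_fun => // x /set_mem /ch.
move=> w1 w2 uw1 w12 w2v.
have sub x : x \in `[w1, w2] -> x \in `]u, v[.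
  by rewrite !in_itv /= => /andP[? ?]; apply/andP; split; lra.
have contF x : x \in `]u, v[ -> {for x, continuous F}.
  by move=> /dF [dFx _]; exact/differentiable_continuous/derivable1_diffP.
rewrite (@continuous_FTC2 _ _ F _ _ w12) -?EFinB ?lee_fin; first exact: FB.
- by apply: continuous_in_subspaceT => x /[!inE] /sub; exact: ch.
- split.
  + by move=> x /subset_itv_oo_cc /sub /dF [].
  + by apply: cvg_at_right_filter; apply: contF; rewrite in_itv /= uw1; lra.
  + by apply: cvg_at_left_filter; apply: contF; rewrite in_itv /= w2v; lra.
- by move=> x /subset_itv_oo_cc /sub /dF dFx; rewrite derive1E derive_val.
Qed.

Lemma measurable_powR_dist (z p : R) : measurable_fun setT (fun x : R => `|x - z| `^ p).
Proof.
apply: measurableT_comp (measurable_powR _) _.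
by apply: measurableT_comp => //; exact: measurable_funB.
Qed.

Lemma integral_powRN_dist_right (z L r : R) : 0 < L -> 0 <= r < 1 ->
  (\int[mu]_(x in `[z, (z + L)%R]) (`|x - z| `^ (- r))%R%:E
     <= (L `^ (1 - r) / (1 - r))%R%:E)%E.
Proof.
move=> L0 /andP[r0 r1]; have r1_gt0 : 0 < 1 - r by rewrite subr_gt0.
have -> : (\int[mu]_(x in `[z, (z + L)%R]) (`|x - z| `^ (- r))%R%:E =
           \int[mu]_(x in `[z, (z + L)%R]) ((x - z) `^ (- r))%R%:E)%E.
  apply: eq_integral => x; rewrite inE /= in_itv /= => /andP[zx _].
  by rewrite ger0_norm // subr_ge0.
pose F y := (1 - r)^-1 * (y - z) `^ (1 - r).
have dF x : z < x -> is_derive x 1 F ((x - z) `^ (- r)).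
  move=> zx; have := is_deriveZ (1 - r)^-1 (is_derive_powR_sub (1 - r) zx).
  by rewrite /GRing.scale /= mulrA mulVf ?gt_eqF // mul1r addrAC subrr add0r.
apply: (ge0_integral_itv_le_antiderivative (F := F)).
- by rewrite ltrDl.
- by move=> x _; exact: powR_ge0.
- move=> x /[!in_itv] /= /andP[zx _].
  have [dx _] := is_derive_powR_sub (- r) zx.
  exact/differentiable_continuous/derivable1_diffP.
- by move=> x /[!in_itv] /= /andP[zx _]; exact: dF.
move=> w1 w2 zw1 w12 w2L; rewrite /F.
have Fw1 : 0 <= (1 - r)^-1 * (w1 - z) `^ (1 - r) by rewrite mulr_ge0 ?invr_ge0 ?powR_ge0 ?ltW.
have : (1 - r)^-1 * (w2 - z) `^ (1 - r) <= (1 - r)^-1 * L `^ (1 - r).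
  by rewrite ler_pM2l ?invr_gt0 //; apply: ge0_ler_powR; rewrite ?nnegrE; lra.
rewrite [_ / _]mulrC; lra.
Qed.

Lemma integral_powRN_dist_left (z L r : R) : 0 < L -> 0 <= r < 1 ->
  (\int[mu]_(x in `[(z - L)%R, z]) (`|x - z| `^ (- r))%R%:E
     <= (L `^ (1 - r) / (1 - r))%R%:E)%E.
Proof.
move=> L0 /andP[r0 r1]; have r1_gt0 : 0 < 1 - r by rewrite subr_gt0.
have -> : (\int[mu]_(x in `[(z - L)%R, z]) (`|x - z| `^ (- r))%R%:E =
           \int[mu]_(x in `[(z - L)%R, z]) ((z - x) `^ (- r))%R%:E)%E.
  apply: eq_integral => x; rewrite inE /= in_itv /= => /andP[_ xz].
  by rewrite distrC ger0_norm // subr_ge0.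
pose F y := - ((1 - r)^-1 * (z - y) `^ (1 - r)).
have dF x : x < z -> is_derive x 1 F ((z - x) `^ (- r)).
  move=> xz; have := is_deriveN (is_deriveZ (1 - r)^-1 (is_derive_powR_rsub (1 - r) xz)).
  by rewrite /GRing.scale /= mulrN opprK mulrA mulVf ?gt_eqF // mul1r addrAC subrr add0r.
apply: (ge0_integral_itv_le_antiderivative (F := F)).
- by rewrite gtrBl.
- by move=> x _; exact: powR_ge0.
- move=> x /[!in_itv] /= /andP[_ xz].
  have [dx _] := is_derive_powR_rsub (- r) xz.
  exact/differentiable_continuous/derivable1_diffP.
- by move=> x /[!in_itv] /= /andP[_ xz]; exact: dF.
move=> w1 w2 Lw1 w12 w2z; rewrite /F.
have Fw2 : 0 <= (1 - r)^-1 * (z - w2) `^ (1 - r) by rewrite mulr_ge0 ?invr_ge0 ?powR_ge0 ?ltW.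
have : (1 - r)^-1 * (z - w1) `^ (1 - r) <= (1 - r)^-1 * L `^ (1 - r).
  by rewrite ler_pM2l ?invr_gt0 //; apply: ge0_ler_powR; rewrite ?nnegrE; lra.
rewrite [_ / _]mulrC; lra.
Qed.

Lemma integral_powRN_dist (z L r : R) : 0 < L -> 0 <= r < 1 ->
  (\int[mu]_(x in `[(z - L)%R, (z + L)%R]) (`|x - z| `^ (- r))%R%:E
     <= (2 * (L `^ (1 - r) / (1 - r)))%R%:E)%E.
Proof.
move=> L0 r01.
have mh : measurable_fun setT (fun x : R => (`|x - z| `^ (- r))%:E).
  by apply/measurable_EFinP; exact: measurable_powR_dist.
have h0 x : (0 <= (`|x - z| `^ (- r))%:E)%E by rewrite lee_fin powR_ge0.
rewrite (@itv_bndbnd_setU _ _ _ (BLeft z)) ?bnd_simp; [|lra..].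
rewrite ge0_integral_setU //; last 2 first.
- exact: measurable_funS mh.
- by apply/disj_setPS => x [/=]; rewrite !in_itv /= => /andP[_ /lt_geF ->] /andP[].
rewrite mulr2n mulrDl mul1r EFinD; apply: leeD.
- apply: le_trans _ (integral_powRN_dist_left z L0 r01).
  apply: ge0_subset_integral => //; first exact: measurable_funS mh.
  by move=> x; rewrite /= !in_itv /= => /andP[-> /ltW].
- exact: integral_powRN_dist_right.
Qed.

Lemma ge0_integral_le_powRN_dist (F : R -> \bar R) (a b z L M r : R) :
  z \in `[a, b] -> b - a <= L -> 0 < L -> 0 <= M -> 0 <= r < 1 ->
  measurable_fun (`[a, b] `\ z) F ->
  (forall s, (`[a, b] `\ z) s -> 0 <= F s <= (M * `|s - z| `^ (- r))%:E)%E ->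
  (\int[mu]_(x in `[a, b]) F x <= (M * (2 * (L `^ (1 - r) / (1 - r))))%:E)%E.
Proof.
move=> zab baL L0 M0 r01 mF Fbnd.
have mD : measurable (`[a, b] `\ z) by apply: measurableD.
have mh : measurable_fun setT (fun x : R => (`|x - z| `^ (- r))%:E).
  by apply/measurable_EFinP; exact: measurable_powR_dist.
have mG : measurable_fun (`[a, b] `\ z) (fun x => (M * `|x - z| `^ (- r))%:E).
  apply/measurable_EFinP/measurable_funM => //.
  by apply/measurable_EFinP; exact: measurable_funS mh.
rewrite -(integral_setD1 mD mF).
apply: le_trans (ge0_le_integral mu mD (fun s Ds => proj1 (andP (Fbnd s Ds))) mF mG
  (fun s Ds => proj2 (andP (Fbnd s Ds)))) _.
under eq_integral do rewrite EFinM.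
rewrite ge0_integralZl_EFin //; last exact: measurable_funS mh.
rewrite EFinM; apply: lee_wpmul2l; first exact: M0.
apply: le_trans _ (integral_powRN_dist z L0 r01).
apply: ge0_subset_integral => //; first exact: measurable_funS mh.
move=> x [/=]; move: zab; rewrite !in_itv /= => /andP[? ?] /andP[? ?] _.
by apply/andP; split; lra.
Qed.
End power_integrals.

Section monotone_increments.
Context {R : realType}.

Lemma derive_neq0_monotonic (phi phi' : R -> R) (a b : R) :
  {within `[a, b], continuous phi} ->
  {in `]a, b[, forall x : R, is_derive x 1 phi (phi' x)} ->
  {in `]a, b[, forall x, phi' x != 0} ->
  {in `[a, b] &, {homo phi : x y / x <= y}} \/
  {in `[a, b] &, {homo phi : x y /~ x <= y}}.
Proof.
move=> cphi dphi phi'0.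
have lt_neq x y : x \in `[a, b] -> y \in `[a, b] -> x < y -> phi x != phi y.
  rewrite !in_itv /= => /andP[ax _] /andP[_ yb] xy.
  have sub : `[x, y] `<=` `[a, b] by apply: subset_itvScc; rewrite bnd_simp.
  have sub' t : t \in `]x, y[ -> t \in `]a, b[.
    by rewrite !in_itv /= => /andP[? ?]; apply/andP; split; lra.
  have [c /sub' cab] := MVT xy (fun t => dphi t \o sub' t) (continuous_subspaceW sub cphi).
  by rewrite eq_sym -subr_eq0 => ->; rewrite mulf_neq0 ?phi'0 // subr_eq0 gt_eqF.
have inj : {in `[a, b] &, injective phi}.
  move=> x y xab yab e; case: (ltgtP x y) => // [xy|yx].
  - by have := lt_neq _ _ xab yab xy; rewrite e eqxx.
  - by have := lt_neq _ _ yab xab yx; rewrite e eqxx.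
have [up|down] := itv_continuous_inj_mono cphi inj.
- by left; exact: ltW_homo_in.
- by right; exact: ltW_nhomo_in.
Qed.

Lemma monotonic_normB_le (phi : R -> R) (a b x u v y : R) :
  {in `[a, b] &, {homo phi : s t / s <= t}} \/
  {in `[a, b] &, {homo phi : s t /~ s <= t}} ->
  a <= x -> x <= u -> u <= v -> v <= y -> y <= b ->
  `|phi v - phi u| <= `|phi y - phi x|.
Proof.
move=> mono ax xu uv vy yb.
have [xab uab vab yab] : [/\ x \in `[a, b], u \in `[a, b], v \in `[a, b] & y \in `[a, b]].
  by rewrite !in_itv /=; split; apply/andP; split; lra.
case: mono => m.
- have := m x u xab uab xu; have := m u v uab vab uv; have := m v y vab yab vy.
  by move=> *; rewrite !ger0_norm ?subr_ge0 //; lra.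
- have := m u x uab xab xu; have := m v u vab uab uv; have := m y v yab vab vy.
  by move=> *; rewrite !ler0_norm ?subr_le0 //; lra.
Qed.

Lemma monotonic_increment_lb (phi phi' h : R -> R) (a b c : R) :
  {within `[a, b], continuous phi} ->
  {in `]a, b[, forall x : R, is_derive x 1 phi (phi' x)} ->
  {in `[a, b] &, {homo phi : s t / s <= t}} \/
  {in `[a, b] &, {homo phi : s t /~ s <= t}} ->
  {in Num.nneg &, {homo h : s t / s <= t}} ->
  {in `]a, b[, forall x, h `|x - c| <= `|phi' x|} ->
  {in `[a, b] &, forall x y, h (`|y - x| / 4) * (`|y - x| / 4) <= `|phi y - phi x|}.
Proof.
move=> cphi dphi mono hmono hphi' x y xab yab.
wlog xy : x y xab yab / x <= y.
  move=> H; have [xy|/ltW yx] := leP x y; first exact: H.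
  by rewrite distrC [X in _ <= X]distrC; exact: H.
move: xab yab; rewrite !in_itv /= => /andP[ax _] /andP[_ yb].
have [<-|xy'] := eqVneq x y; first by rewrite !subrr normr0 mul0r mulr0.
have {xy xy'} xy : x < y by rewrite lt_neqAle xy' xy.
rewrite ger0_norm; last by rewrite subr_ge0 ltW.
set d := (y - x) / 4; have d_gt0 : 0 < d by rewrite divr_gt0 // subr_gt0.
have [u [v [xu uv vy vud far]]] : exists u v, [/\ x <= u, u < v, v <= y, v - u = d &
    forall t, u < t -> t < v -> d <= `|t - c|].
  have [cm|mc] := leP c ((x + y) / 2).
  - exists (y - d), y; split; rewrite /d; try lra.
    by move=> t ? ?; have := ler_norm (t - c); lra.
  - exists x, (x + d); split; rewrite /d; try lra.
    by move=> t ? ?; have := ler_norm (- (t - c)); rewrite normrN; lra.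
have sub t : t \in `]u, v[ -> t \in `]a, b[.
  by rewrite !in_itv /= => /andP[? ?]; apply/andP; split; lra.
have cuv : {within `[u, v], continuous phi}.
  by apply: continuous_subspaceW cphi; apply: subset_itvScc; rewrite bnd_simp; lra.
have [t /[dup] tuv /sub tab mvt] := MVT uv (fun t => dphi t \o sub t) cuv.
apply: le_trans _ (monotonic_normB_le mono ax xu (ltW uv) vy yb).
rewrite mvt vud normrM (ger0_norm (ltW d_gt0)) ler_pM2r //.
apply: le_trans _ (hphi' t tab); apply: hmono; rewrite ?nnegrE ?(ltW d_gt0) //.
by move: tuv; rewrite in_itv /= => /andP[? ?]; exact: far.
Qed.

Lemma IVT_mul_le0 (g : R -> R) (x y : R) : x <= y ->
  {within `[x, y], continuous g} -> g x * g y <= 0 ->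
  exists2 c, c \in `[x, y] & g c = 0.
Proof.
move=> xy cg gxy; apply: IVT => //; rewrite ge_min le_max.
have [gx|gx] := ltP (g x) 0.
  have gy : 0 <= g y by nra.
  by rewrite (ltW gx) gy orbT.
have [_|gy] := leP (g y) 0; first by rewrite orbT.
by move: gxy; rewrite pmulr_lle0 // => ->.
Qed.

Lemma argmin_normB_le (g : R -> R) (a b z : R) :
  {within `[a, b], continuous g} -> z \in `[a, b] ->
  {in `[a, b], forall t, `|g z| <= `|g t|} ->
  {in `[a, b], forall s, `|g s - g z| <= `|g s|}.
Proof.
move=> cg zab zmin s sab.
have [gz0|gz_neq0] := eqVneq (g z) 0; first by rewrite gz0 subr0.
have sgn : 0 < g s * g z.
  rewrite ltNge; apply/negP => sgn; move/negP: gz_neq0; apply.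
  have sub u v : u \in `[a, b] -> v \in `[a, b] -> `[u, v] `<=` `[a, b].
    rewrite !in_itv /= => /andP[? _] /andP[_ ?].
    by apply: subset_itvScc; rewrite bnd_simp.
  have [w wab gw0] : exists2 w, w \in `[a, b] & g w = 0.
    have [sz|zs] := leP s z.
    - have [w ? ?] := IVT_mul_le0 sz (continuous_subspaceW (sub _ _ sab zab) cg) sgn.
      by exists w => //; exact: (sub _ _ sab zab).
    - have [w ? ?] := IVT_mul_le0 (ltW zs)
        (continuous_subspaceW (sub _ _ zab sab) cg) ltac:(by rewrite mulrC).
      by exists w => //; exact: (sub _ _ zab sab).
  by move: (zmin w wab); rewrite gw0 normr0 normr_le0.
move: (zmin s sab); have [gz|gz] := ltP 0 (g z).
- have gs : 0 < g s by rewrite -(pmulr_lgt0 _ gz).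
  by rewrite (gtr0_norm gz) (gtr0_norm gs) ler_norml => ?; apply/andP; split; lra.
- have gz' : g z < 0 by rewrite lt_neqAle gz_neq0.
  have gs : g s < 0 by rewrite -(nmulr_lgt0 _ gz').
  by rewrite (ltr0_norm gz') (ltr0_norm gs) ler_norml => ?; apply/andP; split; lra.
Qed.
End monotone_increments.

Section C2_estimates.
Context {R : realType}.

Lemma sqrt_mul_powR_le (k w p y : R) : 0 <= k -> 0 <= w -> 0 <= p ->
  k * w `^ p * w <= y ^+ 2 -> Num.sqrt k * w `^ ((p + 1) / 2) <= `|y|.
Proof.
move=> k0 w0 p0 kwy.
have sqr_pow : (w `^ ((p + 1) / 2)) ^+ 2 = w `^ p * w.
  rewrite -powR_mulrn ?powR_ge0 // -powRrM divfK ?pnatr_eq0 //.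
  by rewrite powRD ?powRr1 // gt_eqF // ltr_wpDl.
rewrite -sqrtr_sqr; apply: le_trans _ (ler_wsqrtr kwy).
by rewrite -mulrA -sqr_pow sqrtrM // sqrtr_sqr ger0_norm ?powR_ge0.
Qed.

Lemma powR_dist_bound_endpoint (G : R -> R) (t1 t2 a b A al : R) :
  t1 <= a -> b <= t2 ->
  {in `[a, b], forall s, A * (s - t1) `^ al <= G s} \/
  {in `[a, b], forall s, A * (t2 - s) `^ al <= G s} ->
  exists2 th, th \notin `]a, b[ & {in `[a, b], forall s, A * `|s - th| `^ al <= G s}.
Proof.
move=> t1a bt2 hyp.
have ge0 s : s \in `[a, b] -> 0 <= s - t1 /\ 0 <= t2 - s.
  by rewrite in_itv /= !subr_ge0 => /andP[? ?]; split; lra.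
case: hyp => h; [exists t1 | exists t2].
- by rewrite in_itv /= negb_and -!leNgt t1a.
- by move=> s sab; rewrite ger0_norm; [exact: h | case: (ge0 s sab)].
- by rewrite in_itv /= negb_and -!leNgt bt2 orbT.
- by move=> s sab; rewrite distrC ger0_norm; [exact: h | case: (ge0 s sab)].
Qed.

Lemma norm_derive1_lb (f : R -> R) (a b th A al : R) :
  a <= b -> 0 < A -> 0 <= al -> th \notin `]a, b[ ->
  {in `[a, b], forall x : R, derivable (derive1 f) x 1} ->
  {in `[a, b], forall s, A * `|s - th| `^ al <= `|derive1 f s * derive1 (derive1 f) s|} ->
  exists2 c, c \notin `]a, b[ & {in `[a, b], forall s,
    Num.sqrt (2 * A) * (`|s - c| / 4) `^ ((al + 1) / 2) <= `|derive1 f s|}.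
Proof.
move=> ab A_gt0 al_ge0 thab df1 hyp.
pose phi x := derive1 f x ^+ 2; pose phi' x := 2 * (derive1 f x * derive1 (derive1 f) x).
have dphi x : x \in `[a, b] -> is_derive x 1 phi (phi' x).
  move=> xab; have := is_deriveX 2 (derivableP (df1 x xab)).
  by rewrite -derive1E /phi' /GRing.scale /= expr1 mulrA.
have dphi' : {in `]a, b[, forall x : R, is_derive x 1 phi (phi' x)}.
  by move=> x /subset_itv_oo_cc; exact: dphi.
have cphi : {within `[a, b], continuous phi}.
  by apply: derivable_within_continuous => x /dphi [].
pose h t := 2 * A * t `^ al.
have hmono : {in Num.nneg &, {homo h : s t / s <= t}}.
  by move=> s t s0 t0 st; rewrite ler_pM2l ?mulr_gt0 //; exact: ge0_ler_powR.
have hphi' : {in `]a, b[, forall x, h `|x - th| <= `|phi' x|}.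
  move=> x /subset_itv_oo_cc xab.
  by rewrite /h /phi' normrM ger0_norm // -mulrA ler_pM2l //; exact: hyp.
have phi'_neq0 : {in `]a, b[, forall x, phi' x != 0}.
  move=> x xab; rewrite -normr_gt0; apply: lt_le_trans (hphi' x xab).
  rewrite /h mulr_gt0 ?mulr_gt0 // powR_gt0 // normr_gt0 subr_eq0.
  by apply: contraNneq thab => <-.
have mono := derive_neq0_monotonic cphi dphi' phi'_neq0.
have [c [cab cth] cmin] : exists2 c, c \in `[a, b] /\ c \notin `]a, b[ &
    {in `[a, b], forall t, `|phi c| <= `|phi t|}.
  have phi_ge0 t : `|phi t| = phi t by rewrite ger0_norm // sqr_ge0.
  case: mono => m; [exists a | exists b]; rewrite ?in_itv /= ?lexx ?ab ?ltxx ?andbF //;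
    move=> t /[dup] tab; rewrite !phi_ge0 in_itv /= => /andP[ta tb].
  - by apply: m; rewrite // in_itv /= lexx ab.
  - by apply: m; rewrite // in_itv /= lexx ab.
exists c => // s sab.
apply: sqrt_mul_powR_le; rewrite ?divr_ge0 ?mulr_ge0 ?(ltW A_gt0) //.
apply: le_trans (monotonic_increment_lb cphi dphi' mono hmono hphi' cab sab) _.
apply: le_trans (argmin_normB_le cphi cab cmin sab) _.
by rewrite ger0_norm // sqr_ge0.
Qed.

Lemma norm_lb_of_derive1 (f : R -> R) (a b c k q : R) :
  a <= b -> 0 < k -> 0 <= q -> c \notin `]a, b[ ->
  {in `[a, b], forall x : R, derivable f x 1} ->
  {in `[a, b], forall s, k * (`|s - c| / 4) `^ q <= `|derive1 f s|} ->
  exists2 z, z \in `[a, b] &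
    {in `[a, b], forall s, k * (`|s - z| / 16) `^ (q + 1) <= `|f s|}.
Proof.
move=> ab k_gt0 q_ge0 cab df hyp.
have df' : {in `]a, b[, forall x : R, is_derive x 1 f (derive1 f x)}.
  by move=> x /subset_itv_oo_cc xab; rewrite derive1E; exact: derivableP (df x xab).
have cf : {within `[a, b], continuous f} by exact: derivable_within_continuous.
pose h t := k * (t / 4) `^ q.
have hmono : {in Num.nneg &, {homo h : s t / s <= t}}.
  move=> s t; rewrite !nnegrE => s0 t0 st; rewrite ler_pM2l //.
  by apply: ge0_ler_powR; rewrite ?nnegrE ?divr_ge0 ?ler_pM2r.
have hf' : {in `]a, b[, forall x, h `|x - c| <= `|derive1 f x|}.
  by move=> x /subset_itv_oo_cc; exact: hyp.
have f'_neq0 : {in `]a, b[, forall x, derive1 f x != 0}.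
  move=> x xab; rewrite -normr_gt0; apply: lt_le_trans (hf' x xab).
  rewrite /h mulr_gt0 // powR_gt0 // divr_gt0 // normr_gt0 subr_eq0.
  by apply: contraNneq cab => <-.
have mono := derive_neq0_monotonic cf df' f'_neq0.
have cnf : {within `[a, b], continuous (fun x => `|f x|)}.
  by move=> x; apply: continuous_comp (cf x) _; exact: norm_continuous.
have [z zab zmin] := EVT_min ab cnf.
exists z => // s sab.
apply: le_trans _ (argmin_normB_le cf zab zmin sab).
apply: le_trans _ (monotonic_increment_lb cf df' mono hmono hf' zab sab).
have d_ge0 : 0 <= `|s - z| by [].
rewrite /h -mulrA ler_pM2l // -mulrA -invfM powRD ?powRr1 ?divr_ge0 //; last first.
  by rewrite gt_eqF // ltr_wpDl.
have -> : 4 * 4 = 16 :> R by rewrite -natrM.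
by rewrite ler_wpM2l ?powR_ge0 //; lra.
Qed.
End C2_estimates.

Section neg_pow_abs.
Context {R : realType}.

Lemma measurable_neg_pow_abs (D : set R) (g : R) (f : R -> R) :
  measurable_fun D f -> (forall s, D s -> f s != 0) ->
  measurable_fun D (neg_pow_abs g f).
Proof.
move=> mf f_neq0.
apply: (eq_measurable_fun (EFin \o (fun s => `|f s| `^ (- g^-1)))).
  by move=> s /set_mem /f_neq0 fs; rewrite /neg_pow_abs /= (negbTE fs).
apply/measurable_EFinP; apply: measurableT_comp (measurable_powR _) _.
exact: measurableT_comp.
Qed.

Lemma neg_pow_abs_le (g k e m d : R) (f : R -> R) (s : R) :
  0 < g -> 0 < k -> 0 < e -> 0 < d -> k * (d * e) `^ m <= `|f s| ->
  (0 <= neg_pow_abs g f s <=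
     (k `^ (- g^-1) * e `^ (- (m / g)) * d `^ (- (m / g)))%:E)%E.
Proof.
move=> g_gt0 k_gt0 e_gt0 d_gt0 hf.
have y_gt0 : 0 < k * (d * e) `^ m by rewrite mulr_gt0 ?powR_gt0 ?mulr_gt0.
have fs : f s != 0 by rewrite -normr_gt0 (lt_le_trans y_gt0 hf).
rewrite /neg_pow_abs (negbTE fs) !lee_fin powR_ge0 /=.
apply: (@le_trans _ _ ((k * (d * e) `^ m) `^ (- g^-1))).
  rewrite !powRN lef_pV2 ?posrE ?powR_gt0 ?(lt_le_trans y_gt0 hf) //.
  by apply: ge0_ler_powR; rewrite ?nnegrE ?invr_ge0 ?(ltW g_gt0) ?(ltW y_gt0).
rewrite powRM ?powR_ge0 ?(ltW k_gt0) // -powRrM mulrN.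
rewrite powRM ?(ltW d_gt0) ?(ltW e_gt0) //.
by rewrite [d `^ _ * _]mulrC mulrA.
Qed.

Lemma integral_neg_pow_abs_le (f : R -> R) (a b z g k e m L : R) :
  0 < g -> 0 < k -> 0 < e -> 0 <= m / g < 1 ->
  z \in `[a, b] -> b - a <= L -> 0 < L -> {within `[a, b], continuous f} ->
  {in `[a, b], forall s, k * (`|s - z| * e) `^ m <= `|f s|} ->
  (\int[lebesgue_measure]_(s in `[a, b]) neg_pow_abs g f s <=
     (k `^ (- g^-1) * e `^ (- (m / g)) * (2 * (L `^ (1 - m / g) / (1 - m / g))))%:E)%E.
Proof.
move=> g_gt0 k_gt0 e_gt0 r01 zab baL L_gt0 cf hf.
have dist_gt0 s : (`[a, b] `\ z) s -> 0 < `|s - z|.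
  by case=> _ /eqP sz; rewrite normr_gt0 subr_eq0.
apply: ge0_integral_le_powRN_dist zab baL L_gt0 _ r01 _ _.
- by rewrite mulr_ge0 ?powR_ge0.
- apply: measurable_neg_pow_abs.
    exact: measurable_funS (subspace_continuous_measurable_fun _ cf).
  move=> s Ds; rewrite -normr_gt0; apply: lt_le_trans (hf s Ds.1).
  by rewrite mulr_gt0 ?powR_gt0 ?mulr_gt0 ?dist_gt0.
- by move=> s Ds; apply: neg_pow_abs_le (hf s Ds.1) => //; exact: dist_gt0.
Qed.
End neg_pow_abs.

Theorem lemma3p5 (R : realType) (t1 t2 g A al : R) :
  t1 < t2 -> 1 < g -> 0 < A -> 0 < al -> al < 2 * g - 3 ->
  exists C : R, 0 < C /\
    forall (f : R -> R) (a b : R),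
      C2_on t1 t2 f -> t1 <= a -> a <= b -> b <= t2 ->
      ({in `[a, b], forall s,
          A * (s - t1) `^ al <= `|derive1 f s * derive1 (derive1 f) s|} \/
       {in `[a, b], forall s,
          A * (t2 - s) `^ al <= `|derive1 f s * derive1 (derive1 f) s|}) ->
      (\int[lebesgue_measure]_(s in `[a, b]) neg_pow_abs g f s <= C%:E)%E.
Proof.
move=> t12 g1 A_gt0 al_gt0 al_lt.
pose q := (al + 1) / 2; pose r := (q + 1) / g; pose k := Num.sqrt (2 * A).
have g_gt0 : 0 < g by apply: lt_trans g1.
have q_ge0 : 0 <= q by rewrite divr_ge0 // addr_ge0 // ltW.
have r01 : 0 <= r < 1.
  apply/andP; split; first by rewrite divr_ge0 ?addr_ge0 ?(ltW g_gt0).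
  by rewrite ltr_pdivrMr // mul1r /q; lra.
have k_gt0 : 0 < k by rewrite sqrtr_gt0 mulr_gt0.
exists (k `^ (- g^-1) * 16^-1 `^ (- r) * (2 * ((t2 - t1) `^ (1 - r) / (1 - r)))).
split; first by case/andP: r01 => *; rewrite !mulr_gt0 ?powR_gt0 ?invr_gt0 ?subr_gt0.
move=> f a b [df d2f _] t1a ab bt2 hyp.
have sub x : x \in `[a, b] -> x \in `[t1, t2].
  by rewrite !in_itv /= => /andP[? ?]; apply/andP; split; lra.
have [th thab hth] := powR_dist_bound_endpoint t1a bt2 hyp.
have [c cab hc] := norm_derive1_lb ab A_gt0 (ltW al_gt0) thab (fun x => d2f x \o sub x) hth.
have [z zab hz] := norm_lb_of_derive1 ab k_gt0 q_ge0 cab (fun x => df x \o sub x) hc.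
apply: integral_neg_pow_abs_le zab _ _ _ hz => //; try lra.
by apply: derivable_within_continuous => x /sub /df.
Qed.
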